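(* In the language $\mathcal{R}\Pi$ described in the context, if $\vdash r : b_1\;R\;b_2$ and $\vdash s : S\,b_1$, then the set obtained by evaluating $r\,\overline{@}\,s$ has type $S\,b_2$, i.e. $\vdash r\,\overline{@}\,s : S\,b_2$.
   Context: Base language $\Pi$: types $b ::= 0\mid 1\mid b+b\mid b\times b\mid \mathit{bool}$ with values $(),\ \mathit{left}\,v,\ \mathit{right}\,v,\ (v,v),\ \mathtt{T},\mathtt{F}$ typed in the usual way ($()$:1, injections into sums, pairs into products, $\mathtt{T},\mathtt{F}:\mathit{bool}$), and reversible combinators $c : b_1\leftrightarrow b_2$ (built from primitive type isomorphisms for unit, commutativity and associativity of $+$ and $\times$, distributivity, $0\times b\leftrightarrow 0$, and $\mathit{bool}\leftrightarrow 1+1$, closed under sequential composition and $\oplus,\otimes$), each acting as a bijection on values: $c\,v\mapsto c(v)$ with $c(v):b_2$ whenever $v:b_1$; in particular $\mathit{uniti}_\times : b\leftrightarrow 1\times b$ maps $v\mapsto((),v)$, $\mathit{swap}_\times$ maps $(v_1,v_2)\mapsto(v_2,v_1)$, etc. $\mathcal{R}\Pi$ extends types with $S\,b$ (sets of values of type $b$) and $b_1\,R\,b_2$ (relations), and values with set terms $s ::= \emptyset \mid \{v\}\mid s\uplus s$ ($\uplus$ is exclusive union: elements occurring in both operands cancel), typed: $\emptyset : S\,b$; $\{v\}:S\,b$ if $v:b$; $s_1\uplus s_2 : S\,b$ if $s_1,s_2:S\,b$. Relations $r ::= \mathit{arr}\,c \mid r\ggg r\mid \mathit{second}\,r\mid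 \mathit{strength}\mid \mathit{state}\,s\mid \eta_b\mid\varepsilon$ typed: $\mathit{arr}\,c : b_1\,R\,b_2$ if $c : b_1\leftrightarrow b_2$; $r_1\ggg r_2 : b_1\,R\,b_3$ if $r_1:b_1\,R\,b_2$, $r_2 : b_2\,R\,b_3$; $\mathit{second}\,r : (b\times b_1)\,R\,(b\times b_2)$ if $r:b_1\,R\,b_2$; $\mathit{state}\,s : 1\,R\,b$ if $s : S\,b$; $\mathit{strength} : (b_1\times S\,b_2)\,R\,(b_1\times b_2)$; $\eta_b : 1\,R\,(b\times b)$; $\varepsilon : (b\times b)\,R\,1$. Evaluation: $r\,\overline{@}\,\emptyset\mapsto\emptyset$; $r\,\overline{@}\,\{v\}\mapsto r\,@\,v$; $r\,\overline{@}\,(s_1\uplus s_2)\mapsto (r\,\overline{@}\,s_1)\uplus(r\,\overline{@}\,s_2)$; and $(\mathit{arr}\,c)\,@\,v\mapsto\{c(v)\}$; $(r_1\ggg r_2)\,@\,v\mapsto r_2\,\overline{@}\,(r_1\,@\,v)$; $(\mathit{second}\,r)\,@\,(v_1,v_2)\mapsto \mathit{strength}\,@\,(v_1, r\,@\,v_2)$; $\mathit{strength}\,@\,(v,\emptyset)\mapsto\emptyset$; $\mathit{strength}\,@\,(v_1,\{v_2\})\mapsto\{(v_1,v_2)\}$; $\mathit{strength}\,@\,(v,s_1\uplus s_2)\mapsto \mathit{strength}\,@\,(v,s_1)\uplus\mathit{strength}\,@\,(v,s_2)$; $(\mathit{state}\,s)\,@\,()\mapsto s$; $\eta_b\,@\,()\mapsto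 \biguplus_i\{(v_i,v_i)\}$ where $v_i$ ranges over all (finitely many) values of type $b$; $\varepsilon\,@\,(v,v)\mapsto\{()\}$; $\varepsilon\,@\,(v,v')\mapsto\emptyset$ if $v\neq v'$. *)

From Stdlib Require Import List.
Import ListNotations.

(* Types: base Pi types extended with S b (sets of values of type b). *)
Inductive ty : Type :=
| T0 : ty
| T1 : ty
| TPlus : ty -> ty -> ty
| TTimes : ty -> ty -> ty
| TBool : ty
| TS : ty -> ty.

Fixpoint is_base (b : ty) : Prop :=
  match b with
  | T0 | T1 | TBool => True
  | TPlus b1 b2 | TTimes b1 b2 => is_base b1 /\ is_base b2
  | TS _ => False
  end.

(* Values; set terms are values too (empty, singleton, exclusive union). *)
Inductive val : Type :=
| VUnit : val
| VLeft : val -> val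
| VRight : val -> val
| VPair : val -> val -> val
| VTrue : val
| VFalse : val
| VEmpty : val
| VSingle : val -> val
| VUnion : val -> val -> val.

Inductive vtyped : val -> ty -> Prop :=
| vt_unit : vtyped VUnit T1
| vt_left : forall v b1 b2, vtyped v b1 -> vtyped (VLeft v) (TPlus b1 b2)
| vt_right : forall v b1 b2, vtyped v b2 -> vtyped (VRight v) (TPlus b1 b2)
| vt_pair : forall v1 v2 b1 b2, vtyped v1 b1 -> vtyped v2 b2 ->
    vtyped (VPair v1 v2) (TTimes b1 b2)
| vt_true : vtyped VTrue TBool
| vt_false : vtyped VFalse TBool
| vt_empty : forall b, vtyped VEmpty (TS b)
| vt_single : forall v b, vtyped v b -> vtyped (VSingle v) (TS b)
| vt_union : forall s1 s2 b, vtyped s1 (TS b) -> vtyped s2 (TS b) ->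
    vtyped (VUnion s1 s2) (TS b).

Inductive comb : Type :=
| CId : comb
| CUnitePlus : comb
| CUnitiPlus : comb
| CSwapPlus : comb
| CAssoclPlus : comb
| CAssocrPlus : comb
| CUniteTimes : comb
| CUnitiTimes : comb
| CSwapTimes : comb
| CAssoclTimes : comb
| CAssocrTimes : comb
| CAbsorb : comb
| CFactorZ : comb
| CDist : comb
| CFactor : comb
| CBoolTo : comb
| CBoolFrom : comb
| CSeq : comb -> comb -> comb
| CPlus : comb -> comb -> comb
| CTimes : comb -> comb -> comb.

Inductive ctyped : comb -> ty -> ty -> Prop :=
| ct_id : forall b, ctyped CId b b
| ct_unitePlus : forall b, ctyped CUnitePlus (TPlus T0 b) b
| ct_unitiPlus : forall b, ctyped CUnitiPlus b (TPlus T0 b)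
| ct_swapPlus : forall b1 b2, ctyped CSwapPlus (TPlus b1 b2) (TPlus b2 b1)
| ct_assoclPlus : forall b1 b2 b3,
    ctyped CAssoclPlus (TPlus b1 (TPlus b2 b3)) (TPlus (TPlus b1 b2) b3)
| ct_assocrPlus : forall b1 b2 b3,
    ctyped CAssocrPlus (TPlus (TPlus b1 b2) b3) (TPlus b1 (TPlus b2 b3))
| ct_uniteTimes : forall b, ctyped CUniteTimes (TTimes T1 b) b
| ct_unitiTimes : forall b, ctyped CUnitiTimes b (TTimes T1 b)
| ct_swapTimes : forall b1 b2, ctyped CSwapTimes (TTimes b1 b2) (TTimes b2 b1)
| ct_assoclTimes : forall b1 b2 b3,
    ctyped CAssoclTimes (TTimes b1 (TTimes b2 b3)) (TTimes (TTimes b1 b2) b3)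
| ct_assocrTimes : forall b1 b2 b3,
    ctyped CAssocrTimes (TTimes (TTimes b1 b2) b3) (TTimes b1 (TTimes b2 b3))
| ct_absorb : forall b, ctyped CAbsorb (TTimes T0 b) T0
| ct_factorZ : forall b, ctyped CFactorZ T0 (TTimes T0 b)
| ct_dist : forall b1 b2 b3,
    ctyped CDist (TTimes (TPlus b1 b2) b3) (TPlus (TTimes b1 b3) (TTimes b2 b3))
| ct_factor : forall b1 b2 b3,
    ctyped CFactor (TPlus (TTimes b1 b3) (TTimes b2 b3)) (TTimes (TPlus b1 b2) b3)
| ct_boolTo : ctyped CBoolTo TBool (TPlus T1 T1)
| ct_boolFrom : ctyped CBoolFrom (TPlus T1 T1) TBool
| ct_seq : forall c1 c2 b1 b2 b3, ctyped c1 b1 b2 -> ctyped c2 b2 b3 ->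
    ctyped (CSeq c1 c2) b1 b3
| ct_plus : forall c1 c2 b1 b2 b3 b4, ctyped c1 b1 b2 -> ctyped c2 b3 b4 ->
    ctyped (CPlus c1 c2) (TPlus b1 b3) (TPlus b2 b4)
| ct_times : forall c1 c2 b1 b2 b3 b4, ctyped c1 b1 b2 -> ctyped c2 b3 b4 ->
    ctyped (CTimes c1 c2) (TTimes b1 b3) (TTimes b2 b4).

Inductive capply : comb -> val -> val -> Prop :=
| ca_id : forall v, capply CId v v
| ca_unitePlus : forall v, capply CUnitePlus (VRight v) v
| ca_unitiPlus : forall v, capply CUnitiPlus v (VRight v)
| ca_swapPlus_l : forall v, capply CSwapPlus (VLeft v) (VRight v)
| ca_swapPlus_r : forall v, capply CSwapPlus (VRight v) (VLeft v)
| ca_assoclPlus_1 : forall v, capply CAssoclPlus (VLeft v) (VLeft (VLeft v))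
| ca_assoclPlus_2 : forall v,
    capply CAssoclPlus (VRight (VLeft v)) (VLeft (VRight v))
| ca_assoclPlus_3 : forall v,
    capply CAssoclPlus (VRight (VRight v)) (VRight v)
| ca_assocrPlus_1 : forall v, capply CAssocrPlus (VLeft (VLeft v)) (VLeft v)
| ca_assocrPlus_2 : forall v,
    capply CAssocrPlus (VLeft (VRight v)) (VRight (VLeft v))
| ca_assocrPlus_3 : forall v,
    capply CAssocrPlus (VRight v) (VRight (VRight v))
| ca_uniteTimes : forall v, capply CUniteTimes (VPair VUnit v) v
| ca_unitiTimes : forall v, capply CUnitiTimes v (VPair VUnit v)
| ca_swapTimes : forall v1 v2, capply CSwapTimes (VPair v1 v2) (VPair v2 v1)
| ca_assoclTimes : forall v1 v2 v3,
    capply CAssoclTimes (VPair v1 (VPair v2 v3)) (VPair (VPair v1 v2) v3)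
| ca_assocrTimes : forall v1 v2 v3,
    capply CAssocrTimes (VPair (VPair v1 v2) v3) (VPair v1 (VPair v2 v3))
(* absorb / factorZ have no values to act on (0 is empty). *)
| ca_dist_l : forall v1 v3,
    capply CDist (VPair (VLeft v1) v3) (VLeft (VPair v1 v3))
| ca_dist_r : forall v2 v3,
    capply CDist (VPair (VRight v2) v3) (VRight (VPair v2 v3))
| ca_factor_l : forall v1 v3,
    capply CFactor (VLeft (VPair v1 v3)) (VPair (VLeft v1) v3)
| ca_factor_r : forall v2 v3,
    capply CFactor (VRight (VPair v2 v3)) (VPair (VRight v2) v3)
| ca_boolTo_T : capply CBoolTo VTrue (VLeft VUnit)
| ca_boolTo_F : capply CBoolTo VFalse (VRight VUnit)
| ca_boolFrom_T : capply CBoolFrom (VLeft VUnit) VTrue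
| ca_boolFrom_F : capply CBoolFrom (VRight VUnit) VFalse
| ca_seq : forall c1 c2 v v' v'', capply c1 v v' -> capply c2 v' v'' ->
    capply (CSeq c1 c2) v v''
| ca_plus_l : forall c1 c2 v v', capply c1 v v' ->
    capply (CPlus c1 c2) (VLeft v) (VLeft v')
| ca_plus_r : forall c1 c2 v v', capply c2 v v' ->
    capply (CPlus c1 c2) (VRight v) (VRight v')
| ca_times : forall c1 c2 v1 v2 v1' v2', capply c1 v1 v1' -> capply c2 v2 v2' ->
    capply (CTimes c1 c2) (VPair v1 v2) (VPair v1' v2').

Inductive rel : Type :=
| RArr : comb -> rel
| RSeq : rel -> rel -> rel
| RSecond : rel -> rel
| RStrength : rel
| RState : val -> rel
| REta : ty -> rel
| REps : rel.

Inductive rtyped : rel -> ty -> ty -> Prop :=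
| rt_arr : forall c b1 b2, ctyped c b1 b2 -> rtyped (RArr c) b1 b2
| rt_seq : forall r1 r2 b1 b2 b3, rtyped r1 b1 b2 -> rtyped r2 b2 b3 ->
    rtyped (RSeq r1 r2) b1 b3
| rt_second : forall r b b1 b2, rtyped r b1 b2 ->
    rtyped (RSecond r) (TTimes b b1) (TTimes b b2)
| rt_strength : forall b1 b2,
    rtyped RStrength (TTimes b1 (TS b2)) (TTimes b1 b2)
| rt_state : forall s b, vtyped s (TS b) -> rtyped (RState s) T1 b
| rt_eta : forall b, is_base b -> rtyped (REta b) T1 (TTimes b b)
| rt_eps : forall b, rtyped REps (TTimes b b) T1.

Fixpoint enum_ty (b : ty) : list val :=
  match b with
  | T0 => []
  | T1 => [VUnit]
  | TPlus b1 b2 => map VLeft (enum_ty b1) ++ map VRight (enum_ty b2)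
  | TTimes b1 b2 =>
      flat_map (fun v1 => map (fun v2 => VPair v1 v2) (enum_ty b2)) (enum_ty b1)
  | TBool => [VTrue; VFalse]
  | TS _ => []
  end.

Definition biguplus (l : list val) : val := fold_right VUnion VEmpty l.

(* eval r v s : r @ v ↦ s ;  evalbar r s s' : r @bar s ↦ s'. *)
Inductive eval : rel -> val -> val -> Prop :=
| ev_arr : forall c v v', capply c v v' -> eval (RArr c) v (VSingle v')
| ev_seq : forall r1 r2 v s s', eval r1 v s -> evalbar r2 s s' ->
    eval (RSeq r1 r2) v s'
| ev_second : forall r v1 v2 s s', eval r v2 s ->
    eval RStrength (VPair v1 s) s' -> eval (RSecond r) (VPair v1 v2) s'
| ev_strength_empty : forall v, eval RStrength (VPair v VEmpty) VEmpty
| ev_strength_single : forall v1 v2,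
    eval RStrength (VPair v1 (VSingle v2)) (VSingle (VPair v1 v2))
| ev_strength_union : forall v s1 s2 s1' s2',
    eval RStrength (VPair v s1) s1' -> eval RStrength (VPair v s2) s2' ->
    eval RStrength (VPair v (VUnion s1 s2)) (VUnion s1' s2')
| ev_state : forall s, eval (RState s) VUnit s
| ev_eta : forall b,
    eval (REta b) VUnit (biguplus (map (fun v => VSingle (VPair v v)) (enum_ty b)))
| ev_eps_eq : forall v, eval REps (VPair v v) (VSingle VUnit)
| ev_eps_neq : forall v v', v <> v' -> eval REps (VPair v v') VEmpty
with evalbar : rel -> val -> val -> Prop :=
| evb_empty : forall r, evalbar r VEmpty VEmpty
| evb_single : forall r v s, eval r v s -> evalbar r (VSingle v) s
| evb_union : forall r s1 s2 s1' s2', evalbar r s1 s1' -> evalbar r s2 s2' ->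
    evalbar r (VUnion s1 s2) (VUnion s1' s2').

(* The only cases that do more than
   propagate types are [arr c], where preservation of typing by the combinator
   action is needed, and [eta_b], whose result enumerates the diagonal of [b]. *)
From Stdlib Require Import List.

Lemma capply_preserves_type : forall c v v', capply c v v' ->
  forall b1 b2, ctyped c b1 b2 -> vtyped v b1 -> vtyped v' b2.
Proof.
  induction 1; intros b1 b2 Hc Hv; inversion Hc; subst;
  repeat match goal with
  | H : vtyped (VLeft _) _ |- _ => inversion H; subst; clear H
  | H : vtyped (VRight _) _ |- _ => inversion H; subst; clear H
  | H : vtyped (VPair _ _) _ |- _ => inversion H; subst; clear H
  end;
  eauto 10 using vtyped.
Qed.

Lemma enum_ty_typed : forall b, is_base b -> forall v, In v (enum_ty b) -> vtyped v b.
Proof.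
  induction b as [| | b1 IH1 b2 IH2 | b1 IH1 b2 IH2 | |]; simpl;
    intros Hb v Hin; try contradiction.
  - destruct Hin as [<- | []]; constructor.
  - destruct Hb as [Hb1 Hb2].
    apply in_app_or in Hin as [Hin | Hin]; apply in_map_iff in Hin as [x [<- Hx]];
      constructor; auto.
  - destruct Hb as [Hb1 Hb2].
    apply in_flat_map in Hin as [x [Hx Hin]]; apply in_map_iff in Hin as [y [<- Hy]].
    constructor; auto.
  - destruct Hin as [<- | [<- | []]]; constructor.
Qed.

Lemma biguplus_typed : forall b l,
  (forall s, In s l -> vtyped s (TS b)) -> vtyped (biguplus l) (TS b).
Proof.
  intros b l; induction l as [| s l IH]; simpl; intros Hl; constructor; auto.
Qed.

Lemma eta_result_typed : forall b, is_base b ->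
  vtyped (biguplus (map (fun v => VSingle (VPair v v)) (enum_ty b))) (TS (TTimes b b)).
Proof.
  intros b Hb; apply biguplus_typed; intros s Hs.
  apply in_map_iff in Hs as [v [<- Hv]].
  apply enum_ty_typed in Hv; auto using vtyped.
Qed.

Scheme eval_mut := Induction for eval Sort Prop
with evalbar_mut := Induction for evalbar Sort Prop.

Definition eval_preserves (r : rel) (v s : val) : Prop :=
  forall b1 b2, rtyped r b1 b2 -> vtyped v b1 -> vtyped s (TS b2).

Definition evalbar_preserves (r : rel) (s s' : val) : Prop :=
  forall b1 b2, rtyped r b1 b2 -> vtyped s (TS b1) -> vtyped s' (TS b2).

Lemma evalbar_preserves_type : forall r s s', evalbar r s s' -> evalbar_preserves r s s'.
Proof.
  apply (evalbar_mut (fun r v s _ => eval_preserves r v s)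
                     (fun r s s' _ => evalbar_preserves r s s'));
    unfold eval_preserves, evalbar_preserves.
  - intros c v v' Hc b1 b2 Hr Hv; inversion Hr; subst.
    constructor; eapply capply_preserves_type; eauto.
  - intros r1 r2 v s s' _ IH1 _ IH2 b1 b3 Hr Hv; inversion Hr; subst; eauto.
  - intros r v1 v2 s s' _ IHr _ IHst b1 b2 Hr Hv; inversion Hr; subst.
    inversion Hv; subst; eauto using rtyped, vtyped.
  - intros v b1 b2 _ _; constructor.
  - intros v1 v2 b1 b2 Hr Hv; inversion Hr; subst.
    inversion Hv as [| | | ? ? ? ? Hv1 Hs | | | | |]; subst.
    inversion Hs; subst; auto using vtyped.
  - intros v s1 s2 s1' s2' _ IH1 _ IH2 b1 b2 Hr Hv; inversion Hr; subst.
    inversion Hv as [| | | ? ? ? ? Hv1 Hs | | | | |]; subst.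
    inversion Hs; subst.
    constructor; [eapply IH1 | eapply IH2]; eauto using vtyped.
  - intros s b1 b2 Hr _; inversion Hr; subst; assumption.
  - intros b b1 b2 Hr _; inversion Hr; subst; auto using eta_result_typed.
  - intros v b1 b2 Hr _; inversion Hr; subst; auto using vtyped.
  - intros v v' _ b1 b2 _ _; constructor.
  - intros r b1 b2 _ _; constructor.
  - intros r v s _ IH b1 b2 Hr Hs; inversion Hs; subst; eauto.
  - intros r s1 s2 s1' s2' _ IH1 _ IH2 b1 b2 Hr Hs; inversion Hs; subst;
      eauto using vtyped.
Qed.

Theorem proposition2 : forall (r : rel) (b1 b2 : ty) (s s' : val),
  rtyped r b1 b2 -> vtyped s (TS b1) -> evalbar r s s' -> vtyped s' (TS b2).
Proof.
  intros r b1 b2 s s' Hr Hs He.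
  exact (evalbar_preserves_type r s s' He b1 b2 Hr Hs).
Qed.
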